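(* Let $G$ be a simple connected graph and let $v$ be a real eigenvector of $\mathcal M$ with $\mathcal Mv=\mu v$, $\mu>0$. Let $S=\{i: v_i\ge0\}$ and let $\theta\in[0,\pi/2)$ be the angle between $|v|=(|v_1|,\dots,|v_n|)^{\mathsf T}$ and $\delta$. If $\mu>\tan^2\theta$, then $Q(S)>0$.
   Context: $G=(V,E)$ is a finite, undirected, unweighted, simple connected graph with adjacency matrix $A$, degrees $d_i$, $D=\mathrm{Diag}(d_i)$, $\delta=(\sqrt{d_1},\dots,\sqrt{d_n})^{\mathsf T}$, $\mathrm{vol}\, S=\sum_{i\in S}d_i$, $\mathbb 1_S$ the characteristic vector of $S$. $\mathcal M=D^{-1/2}AD^{-1/2}-\frac{1}{\mathrm{vol}\, V}\delta\delta^{\mathsf T}$. The modularity of $S$ is $Q(S)=\mathbb 1_S^{\mathsf T}A\mathbb 1_S-(\mathrm{vol}\, S)^2/\mathrm{vol}\, V$. *)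

From HB Require Import structures.
From mathcomp Require Import all_boot all_order all_algebra.
Set Implicit Arguments. Unset Strict Implicit. Unset Printing Implicit Defensive.
Import Order.TTheory GRing.Theory Num.Theory.
Local Open Scope ring_scope.

Definition simple_graph (n : nat) (e : rel 'I_n) : Prop :=
  symmetric e /\ irreflexive e.
Definition connected_graph (n : nat) (e : rel 'I_n) : Prop :=
  forall i j : 'I_n, connect e i j.

Section Graph.
Variables (R : rcfType) (n : nat) (e : rel 'I_n).

Definition adjmx : 'M[R]_n := \matrix_(i, j) (e i j)%:R.
Definition deg (i : 'I_n) : nat := #|[set j | e i j]|.
Definition vol (S : {set 'I_n}) : R := \sum_(i in S) (deg i)%:R.
Definition degsqrt : 'cV[R]_n := \col_i Num.sqrt (deg i)%:R.
Definition Dinvsqrt : 'M[R]_n := diag_mx (\row_i (Num.sqrt (deg i)%:R)^-1).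
Definition modmx : 'M[R]_n :=
  Dinvsqrt *m adjmx *m Dinvsqrt - (vol setT)^-1 *: (degsqrt *m degsqrt^T).
Definition charvec (S : {set 'I_n}) : 'cV[R]_n := \col_i (i \in S)%:R.
Definition modularity (S : {set 'I_n}) : R :=
  ((charvec S)^T *m adjmx *m charvec S) 0 0 - (vol S) ^+ 2 / vol setT.
End Graph.

Section Angle.
Variables (R : rcfType) (n : nat).
Definition vdot (u w : 'cV[R]_n) : R := (u^T *m w) 0 0.
Definition vnorm (u : 'cV[R]_n) : R := Num.sqrt (vdot u u).
Definition absvec (v : 'cV[R]_n) : 'cV[R]_n := map_mx (fun x => `|x|) v.
Definition cos_angle (u w : 'cV[R]_n) : R := vdot u w / (vnorm u * vnorm w).
Definition tan2_angle (u w : 'cV[R]_n) : R :=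
  (1 - cos_angle u w ^+ 2) / cos_angle u w ^+ 2.
End Angle.

(* Let [u = D^1/2 (1_S - 1_(V \ S))]. Then [u^T M u = 4 Q(S)], [|u|^2 = vol V]
   and [u . v = |v| . delta]. The matrix [M + 1] is positive semidefinite and
   [(M + 1) v = (mu + 1) v], so Cauchy-Schwarz for the form of [M + 1] gives
   [(mu + 1) (|v| . delta)^2 <= |v|^2 (vol V + 4 Q(S))]. As [|delta|^2 = vol V],
   the hypothesis [mu > tan^2 theta] says [|v|^2 vol V < (mu + 1) (|v| . delta)^2],
   whence [Q(S) > 0]. Connectivity only serves to exclude isolated vertices, at
   which [M] has a zero row. *)

From HB Require Import structures.
From mathcomp Require Import all_boot all_order all_algebra.
From mathcomp Require Import ring lra.
Set Implicit Arguments. Unset Strict Implicit. Unset Printing Implicit Defensive.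
Import Order.TTheory GRing.Theory Num.Theory.
Local Open Scope ring_scope.

Lemma weighted_sum_sqr_le (R : realFieldType) (I : finType) (w z : I -> R) :
  (forall i, 0 <= w i) ->
  (\sum_i w i * z i) ^+ 2 <= (\sum_i w i) * \sum_i w i * z i ^+ 2.
Proof.
move=> w_ge0; set W := \sum_i w i; set Z := \sum_i w i * z i.
have W_ge0 : 0 <= W by exact: sumr_ge0.
have [W0 | W_neq0] := eqVneq W 0.
  have w0 := psumr_eq0P (fun i _ => w_ge0 i) W0.
  by rewrite /Z big1 ?expr0n ?W0 ?mul0r // => i _; rewrite w0 ?mul0r.
have W_gt0 : 0 < W by rewrite lt_def W_neq0.
have : 0 <= \sum_i w i * (W * z i - Z) ^+ 2.
  by apply: sumr_ge0 => i _; rewrite mulr_ge0 ?sqr_ge0.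
have -> : \sum_i w i * (W * z i - Z) ^+ 2 =
          W ^+ 2 * \sum_i w i * z i ^+ 2 - 2 * W * Z * Z + Z ^+ 2 * W.
  rewrite (eq_bigr (fun i => W ^+ 2 * (w i * z i ^+ 2) - 2 * W * Z * (w i * z i)
                             + Z ^+ 2 * w i)) => [|i _]; last by ring.
  by rewrite big_split sumrB -!mulr_sumr.
nra.
Qed.

Section InnerProduct.
Variables (R : rcfType) (n : nat).
Implicit Types (u w z : 'cV[R]_n) (M : 'M[R]_n).

Lemma vdotE u w : vdot u w = \sum_i u i 0 * w i 0.
Proof. by rewrite /vdot mxE; apply: eq_bigr => i _; rewrite mxE. Qed.

Lemma vdotC u w : vdot u w = vdot w u.
Proof. by rewrite !vdotE; apply: eq_bigr => i _; rewrite mulrC. Qed.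

Lemma vdotDl u1 u2 w : vdot (u1 + u2) w = vdot u1 w + vdot u2 w.
Proof. by rewrite !vdotE -big_split; apply: eq_bigr => i _; rewrite mxE mulrDl. Qed.

Lemma vdotZl a u w : vdot (a *: u) w = a * vdot u w.
Proof. by rewrite !vdotE mulr_sumr; apply: eq_bigr => i _; rewrite mxE mulrA. Qed.

Lemma vdotNl u w : vdot (- u) w = - vdot u w.
Proof. by rewrite -scaleN1r vdotZl mulN1r. Qed.

Lemma vdotDr u w1 w2 : vdot u (w1 + w2) = vdot u w1 + vdot u w2.
Proof. by rewrite vdotC vdotDl !(vdotC u). Qed.

Lemma vdotZr a u w : vdot u (a *: w) = a * vdot u w.
Proof. by rewrite vdotC vdotZl vdotC. Qed.

Lemma vdotNr u w : vdot u (- w) = - vdot u w.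
Proof. by rewrite vdotC vdotNl vdotC. Qed.

Lemma vdot_mulmx_sym M u w : M^T = M -> vdot u (M *m w) = vdot (M *m u) w.
Proof. by move=> M_sym; rewrite /vdot trmx_mul M_sym mulmxA. Qed.

Lemma vdot_gt0 u : u != 0 -> 0 < vdot u u.
Proof.
move=> /cV0Pn[k uk_neq0]; rewrite vdotE (bigD1 k) //=.
apply: (lt_le_trans (y := u k 0 * u k 0)); first by rewrite -expr2 exprn_even_gt0.
by rewrite lerDl; apply: sumr_ge0 => i _; rewrite -expr2 sqr_ge0.
Qed.

Lemma vdot_absvec u : vdot (absvec u) (absvec u) = vdot u u.
Proof.
by rewrite !vdotE; apply: eq_bigr => i _; rewrite !mxE -!expr2 real_normK ?num_real.
Qed.

Lemma tan2_angleE u w : 0 < vdot u u -> 0 < vdot w w -> vdot u w != 0 ->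
  tan2_angle u w = (vdot u u * vdot w w - vdot u w ^+ 2) / vdot u w ^+ 2.
Proof.
move=> uu_gt0 ww_gt0 uw_neq0.
rewrite /tan2_angle /cos_angle /vnorm expr_div_n exprMn !sqr_sqrtr ?ltW //.
by field; rewrite uw_neq0 !gt_eqF.
Qed.

(* Cauchy-Schwarz for the semidefinite form [y |-> vdot y ((M + 1) y)], applied
   to [z] and the eigenvector [v]. *)
Lemma eigvec_vdot_sqr_le M v z mu :
  M^T = M -> M *m v = mu *: v ->
  (forall y, 0 <= vdot y y + vdot y (M *m y)) -> 0 < vdot v v ->
  vdot z v ^+ 2 * (mu + 1) <= vdot v v * (vdot z z + vdot z (M *m z)).
Proof.
move=> M_sym Mv psd vv_gt0; set w := vdot v v; set b := vdot z v.
have := psd (w *: z - b *: v).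
rewrite mulmxBr -!scalemxAr Mv !(vdotDl, vdotDr, vdotNl, vdotNr, vdotZl, vdotZr).
rewrite (vdot_mulmx_sym v z M_sym) Mv vdotZl (vdotC v z) -/b -/w => h.
have : 0 <= w * (w * (vdot z z + vdot z (M *m z)) - b ^+ 2 * (mu + 1)) by nra.
by rewrite pmulr_rge0 // subr_ge0.
Qed.

End InnerProduct.

Section ModularityMatrix.
Variables (R : rcfType) (n : nat) (e : rel 'I_n).

Local Notation a i j := ((e i j : nat)%:R : R).
Local Notation d i := ((deg e i)%:R : R).
Local Notation sq i := (Num.sqrt (deg e i)%:R : R).
Local Notation V := (vol R e setT).
Local Notation M := (modmx R e).

Lemma degE i : d i = \sum_j a i j.
Proof.
rewrite -natr_sum /deg -sum1_card big_mkcond /=; congr (_%:R).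
by apply: eq_bigr => j _; rewrite inE; case: (e i j).
Qed.

Lemma volT : V = \sum_i d i.
Proof. by rewrite /vol; apply: eq_bigl => i; rewrite inE. Qed.

Lemma vol_sum_adj : V = \sum_i \sum_j a i j.
Proof. by rewrite volT; apply: eq_bigr => i _; rewrite degE. Qed.

Lemma sqrt_deg_sqr i : sq i ^+ 2 = d i.
Proof. by rewrite sqr_sqrtr ?ler0n. Qed.

Lemma modmxE i j : M i j = (sq i)^-1 * a i j * (sq j)^-1 - V^-1 * (sq i * sq j).
Proof. by rewrite /modmx /Dinvsqrt mul_mx_diag mul_diag_mx !mxE big_ord1 !mxE. Qed.

Lemma modmx_deg0 i j : deg e i = 0%N -> M i j = 0.
Proof.
by move=> deg0; rewrite modmxE deg0 mulr0n sqrtr0 invr0 !(mul0r, mulr0, subrr).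
Qed.

(* In terms of [x = D^-1/2 y], with the junk value [0^-1 = 0] at isolated vertices. *)
Lemma vdot_modmx y :
  vdot y (M *m y) = \sum_i \sum_j a i j * (y i 0 / sq i) * (y j 0 / sq j)
                    - V^-1 * (\sum_i sq i * y i 0) ^+ 2.
Proof.
rewrite vdotE expr2 big_distrlr /= mulr_sumr -sumrB; apply: eq_bigr => i _.
rewrite mxE !mulr_sumr -sumrB; apply: eq_bigr => j _.
by rewrite modmxE; ring.
Qed.

Lemma vdot_degsqrt : vdot (degsqrt R e) (degsqrt R e) = V.
Proof.
by rewrite vdotE volT; apply: eq_bigr => i _; rewrite !mxE -expr2 sqrt_deg_sqr.
Qed.

Lemma modularityE S :
  modularity R e S = \sum_i \sum_j a i j * (i \in S)%:R * (j \in S)%:R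
                     - (\sum_i (i \in S)%:R * d i) ^+ 2 / V.
Proof.
rewrite /modularity mxE; congr (_ - _ ^+ 2 / _).
  rewrite exchange_big; apply: eq_bigr => j _.
  rewrite !mxE mulr_suml; apply: eq_bigr => i _.
  by rewrite !mxE; ring.
rewrite /vol big_mkcond; apply: eq_bigr => i _.
by case: (i \in S); rewrite ?mulr1n ?mul1r ?mul0r.
Qed.

Definition signvec (S : {set 'I_n}) : 'cV[R]_n :=
  \col_i ((if i \in S then 1 else -1) * sq i).

Lemma vdot_signvec S : vdot (signvec S) (signvec S) = V.
Proof.
rewrite vdotE volT; apply: eq_bigr => i _.
by rewrite mxE mulrACA -!expr2 sqrt_deg_sqr; case: (i \in S); ring.
Qed.

Lemma vdot_signvec_nonneg (v : 'cV[R]_n) :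
  vdot (signvec [set i | 0 <= v i 0]) v = vdot (absvec v) (degsqrt R e).
Proof.
rewrite !vdotE; apply: eq_bigr => i _; rewrite !mxE inE.
case: ifP => [v_ge0 | /negbT]; first by rewrite ger0_norm //; ring.
by rewrite -ltNge => v_lt0; rewrite ltr0_norm //; ring.
Qed.

Hypothesis e_sym : symmetric e.

Lemma modmx_sym : M^T = M.
Proof. by apply/matrixP => i j; rewrite mxE !modmxE e_sym; congr (_ - _ * _); ring. Qed.

Lemma sum_adj_swap (F : 'I_n -> R) :
  \sum_i \sum_j a i j * F j = \sum_i \sum_j a i j * F i.
Proof.
by rewrite exchange_big; apply: eq_bigr => i _; apply: eq_bigr => j _; rewrite e_sym.
Qed.

End ModularityMatrix.

Section PositiveDegrees.
Variables (R : rcfType) (n : nat) (e : rel 'I_n).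
Hypotheses (e_sym : symmetric e) (deg_gt0 : forall i, (0 < deg e i)%N).

Local Notation a i j := ((e i j : nat)%:R : R).
Local Notation d i := ((deg e i)%:R : R).
Local Notation sq i := (Num.sqrt (deg e i)%:R : R).
Local Notation V := (vol R e setT).
Local Notation M := (modmx R e).

Lemma sqrt_deg_gt0 i : 0 < sq i.
Proof. by rewrite sqrtr_gt0 ltr0n. Qed.

Lemma vol_gt0 (i0 : 'I_n) : 0 < V.
Proof.
rewrite volT (bigD1 i0) //=; apply: (lt_le_trans (y := d i0)); first by rewrite ltr0n.
by rewrite lerDl; apply: sumr_ge0 => *; exact: ler0n.
Qed.

Lemma vdot_absvec_degsqrt_gt0 v : v != 0 -> 0 < vdot (absvec v) (degsqrt R e).
Proof.
move=> /cV0Pn[k vk_neq0]; rewrite vdotE (bigD1 k) //=.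
rewrite ltr_pwDl ?mxE ?mulr_gt0 ?normr_gt0 ?sqrt_deg_gt0 //.
by apply: sumr_ge0 => i _; rewrite !mxE mulr_ge0 ?sqrtr_ge0.
Qed.

(* With [x = D^-1/2 y] and [s = delta^T y],
   [y^T (M + 1) y = 1/2 sum_ij a_ij (x_i + x_j)^2 - s^2 / V], and since
   [2 s = sum_ij a_ij (x_i + x_j)], Cauchy-Schwarz bounds [s^2 / V] by half the
   first term. *)
Lemma modmx_psd y : 0 <= vdot y y + vdot y (M *m y).
Proof.
pose x i := y i 0 / sq i.
have yE i : y i 0 = sq i * x i by rewrite /x mulrC divfK ?gt_eqF ?sqrt_deg_gt0.
pose P := \sum_i \sum_j a i j * x i ^+ 2.
pose X := \sum_i \sum_j a i j * x i * x j.
pose s := \sum_i \sum_j a i j * x i.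
have yyE : vdot y y = P.
  rewrite vdotE; apply: eq_bigr => i _.
  by rewrite -mulr_suml -degE -sqrt_deg_sqr yE; ring.
have sE : \sum_i sq i * y i 0 = s.
  apply: eq_bigr => i _.
  by rewrite -mulr_suml -degE yE mulrA -expr2 sqrt_deg_sqr.
have sum_pairE : \sum_i \sum_j a i j * (x i + x j) = 2 * s.
  rewrite (eq_bigr (fun i => \sum_j a i j * x i + \sum_j a i j * x j)).
    by rewrite big_split /= sum_adj_swap // -/s; ring.
  by move=> i _; rewrite -big_split; apply: eq_bigr => j _; rewrite mulrDr.
have sum_pair_sqrE : \sum_i \sum_j a i j * (x i + x j) ^+ 2 = 2 * (P + X).
  rewrite (eq_bigr (fun i => \sum_j a i j * x i ^+ 2 + \sum_j a i j * x j ^+ 2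
                             + 2 * \sum_j a i j * x i * x j)).
    by rewrite !big_split /= sum_adj_swap // -mulr_sumr -/P -/X; ring.
  move=> i _; rewrite mulr_sumr -!big_split; apply: eq_bigr => j _ /=; ring.
have PX_ge0 : 0 <= P + X.
  have : 0 <= \sum_i \sum_j a i j * (x i + x j) ^+ 2.
    by do 2!apply: sumr_ge0 => ? _; rewrite mulr_ge0 ?ler0n ?sqr_ge0.
  by rewrite sum_pair_sqrE pmulr_rge0.
have cauchy_schwarz : (2 * s) ^+ 2 <= V * (2 * (P + X)).
  rewrite -sum_pairE -sum_pair_sqrE vol_sum_adj !pair_bigA /=.
  exact: (weighted_sum_sqr_le (fun p => x p.1 + x p.2) (fun p => ler0n _ _)).
rewrite yyE vdot_modmx sE -/X.
have [-> | V_neq0] := eqVneq V 0; first by rewrite invr0 mul0r subr0.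
have V_gt0 : 0 < V by rewrite lt_def V_neq0 volT sumr_ge0 // => i _; rewrite ler0n.
have t_ge0 : 0 <= V^-1 * s ^+ 2 by rewrite pmulr_rge0 ?invr_gt0 ?sqr_ge0.
rewrite exprMn (_ : s ^+ 2 = V * (V^-1 * s ^+ 2)) in cauchy_schwarz.
  by nra.
by rewrite mulrA mulfV // mul1r.
Qed.

Lemma modmx_signvec (i0 : 'I_n) S :
  vdot (signvec R e S) (M *m signvec R e S) = 4 * modularity R e S.
Proof.
pose c i : R := (i \in S)%:R.
pose volS := \sum_i c i * d i.
have signE i : (if i \in S then 1 else -1) = 2 * c i - 1.
  by rewrite /c; case: (i \in S); rewrite ?mulr1n ?mulr0n; ring.
have coordE i : signvec R e S i 0 / sq i = 2 * c i - 1.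
  by rewrite mxE signE mulfK ?gt_eqF ?sqrt_deg_gt0.
have weightE i : sq i * signvec R e S i 0 = (2 * c i - 1) * d i.
  by rewrite mxE signE mulrCA -expr2 sqrt_deg_sqr.
have pairE : \sum_i \sum_j a i j * (2 * c i - 1) * (2 * c j - 1) =
             4 * \sum_i \sum_j a i j * c i * c j - 4 * volS + V.
  have volSE : \sum_i \sum_j a i j * c i = volS.
    by apply: eq_bigr => i _; rewrite -mulr_suml -degE mulrC.
  rewrite vol_sum_adj.
  rewrite (eq_bigr (fun i => 4 * \sum_j a i j * c i * c j - 2 * \sum_j a i j * c i
                             - 2 * \sum_j a i j * c j + \sum_j a i j)).
    rewrite big_split !sumrB /= -!mulr_sumr sum_adj_swap // volSE; ring.
  move=> i _; rewrite !mulr_sumr -!sumrB -big_split; apply: eq_bigr => j _ /=; ring.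
have weight_sumE : \sum_i (2 * c i - 1) * d i = 2 * volS - V.
  by rewrite volT mulr_sumr -sumrB; apply: eq_bigr => i _; ring.
rewrite vdot_modmx (eq_bigr _ (fun i _ => weightE i)) weight_sumE.
under eq_bigr do under eq_bigr do rewrite !coordE.
rewrite pairE modularityE /volS /c.
by field; rewrite gt_eqF ?(vol_gt0 i0).
Qed.

End PositiveDegrees.

Lemma connected_deg0_eq (n : nat) (e : rel 'I_n) i k :
  connected_graph e -> deg e i = 0%N -> k = i.
Proof.
move=> conn deg0; have := conn i k; case/connectP => -[_ -> //|j p /=].
have /setP/(_ j) := cards0_eq deg0.
by rewrite !inE => ->.
Qed.

Lemma deg_gt0_of_eigvec (R : rcfType) (n : nat) (e : rel 'I_n) (v : 'cV[R]_n) mu :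
  connected_graph e -> modmx R e *m v = mu *: v -> mu != 0 -> v != 0 ->
  forall i, (0 < deg e i)%N.
Proof.
move=> conn Mv mu_neq0 /cV0Pn[k vk_neq0] i; rewrite lt0n; apply/eqP => deg0.
have ki := connected_deg0_eq k conn deg0; subst k.
have : (modmx R e *m v) i 0 = 0.
  by rewrite mxE big1 // => j _; rewrite modmx_deg0 ?mul0r.
by rewrite Mv mxE => /eqP; rewrite mulf_eq0 (negbTE mu_neq0) (negbTE vk_neq0).
Qed.

Theorem corollary5p3 (R : rcfType) (n : nat) (e : rel 'I_n)
  (hsimple : simple_graph e) (hconn : connected_graph e)
  (v : 'cV[R]_n) (mu : R)
  (hv0 : v != 0) (heig : modmx R e *m v = mu *: v) (hmu : 0 < mu)
  (htan : tan2_angle (absvec v) (degsqrt R e) < mu) :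
  0 < modularity R e [set i | 0 <= v i 0].
Proof.
case: hsimple => e_sym _.
have deg_gt0 := deg_gt0_of_eigvec hconn heig (lt0r_neq0 hmu) hv0.
have /cV0Pn[k _] := hv0.
set S := [set i | 0 <= v i 0].
set w := vdot v v; set a := vdot (absvec v) (degsqrt R e); set V := vol R e setT.
have w_gt0 : 0 < w := vdot_gt0 hv0.
have a_gt0 : 0 < a := vdot_absvec_degsqrt_gt0 deg_gt0 hv0.
have V_gt0 : 0 < V := vol_gt0 R deg_gt0 k.
have := eigvec_vdot_sqr_le (signvec R e S) (modmx_sym R e_sym) heig
          (modmx_psd e_sym deg_gt0) w_gt0.
rewrite vdot_signvec_nonneg vdot_signvec (modmx_signvec R e_sym deg_gt0 k) -/a -/w -/V.
move: htan; rewrite tan2_angleE ?vdot_absvec ?vdot_degsqrt ?gt_eqF // -/a -/w -/V.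
rewrite ltr_pdivrMr ?exprn_gt0 // => tan_lt bound.
have : 0 < w * (4 * modularity R e S) by nra.
by rewrite !pmulr_rgt0.
Qed.
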